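(* Let $I\subseteq\mathbb{R}$ be an interval and let $f,g: I\to\mathbb{R}$ be twice continuously differentiable with $g''(t)>0$ for all $t\in I$. For $n\ge 2$, positive weights $p_1,\dots,p_n$ with $\sum_{i=1}^n p_i=1$, and points $x_1,\dots,x_n\in I$ not all equal, put $$\Lambda_{f,g}(p,x)=\frac{\sum_{i=1}^n p_i f(x_i)-f\left(\sum_{i=1}^n p_i x_i\right)}{\sum_{i=1}^n p_i g(x_i)-g\left(\sum_{i=1}^n p_i x_i\right)}.$$ Then the inequality $\min\{x_1,\dots,x_n\}\le \Lambda_{f,g}(p,x)\le \max\{x_1,\dots,x_n\}$ holds for every $n\ge 2$, every such positive weight sequence $p$ and every such $x_1,\dots,x_n\in I$ (not all equal) if and only if $f''(t)=t\,g''(t)$ for every $t\in I$.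
   Context: Since $g''>0$, $g$ is strictly convex on $I$, so the denominator (a Jensen functional of $g$) is strictly positive when the $x_i$ are not all equal. *)

From Stdlib Require Import Reals Lra.
Open Scope R_scope.

Definition is_interval (I : R -> Prop) : Prop :=
  forall a b c, I a -> I b -> a <= c -> c <= b -> I c.

(* Derivative of f at x relative to I (one-sided at endpoints of I). *)
Definition deriv_within (I : R -> Prop) (f : R -> R) (x l : R) : Prop :=
  forall eps, 0 < eps -> exists delta, 0 < delta /\
    forall y, I y -> y <> x -> Rabs (y - x) < delta ->
      Rabs ((f y - f x) / (y - x) - l) < eps.

Definition cont_within (I : R -> Prop) (f : R -> R) (x : R) : Prop :=
  forall eps, 0 < eps -> exists delta, 0 < delta /\
    forall y, I y -> Rabs (y - x) < delta -> Rabs (f y - f x) < eps.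

Definition C2_on (I : R -> Prop) (f f1 f2 : R -> R) : Prop :=
  forall t, I t ->
    deriv_within I f t (f1 t) /\ deriv_within I f1 t (f2 t) /\ cont_within I f2 t.

Fixpoint sumR (n : nat) (a : nat -> R) : R :=
  match n with
  | O => 0
  | S k => sumR k a + a k
  end.

Fixpoint max_aux (k : nat) (a : nat -> R) : R :=
  match k with
  | O => a O
  | S j => Rmax (max_aux j a) (a (S j))
  end.
Fixpoint min_aux (k : nat) (a : nat -> R) : R :=
  match k with
  | O => a O
  | S j => Rmin (min_aux j a) (a (S j))
  end.

(* max / min of x_0, ..., x_{n-1} (used for n >= 1) *)
Definition maxR (n : nat) (x : nat -> R) : R := max_aux (n - 1) x.
Definition minR (n : nat) (x : nat -> R) : R := min_aux (n - 1) x.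

Definition jensen (h : R -> R) (n : nat) (p x : nat -> R) : R :=
  sumR n (fun i => p i * h (x i)) - h (sumR n (fun i => p i * x i)).

Definition Lambda (f g : R -> R) (n : nat) (p x : nat -> R) : R :=
  jensen f n p x / jensen g n p x.

From Stdlib Require Import Reals Lra Lia.
Open Scope R_scope.

(* Since the Jensen functional is linear in the function,
   Lambda f g lies in [m, M] (with J(g) > 0) iff J(f - m g) >= 0 and
   J(M g - f) >= 0.  Jensen's inequality only needs a nonnegative second
   derivative on the convex hull [m, M] of the points, and there
   (f - m g)'' = (t - m) g'' >= 0 and (M g - f)'' = (M - t) g'' >= 0 as soon
   as f'' = t g''; this gives sufficiency.  Conversely, if f''(t0) < t0 g''(t0)
   (resp. >), continuity yields two close points a < b near t0 such that
   a g - f (resp. f - b g) is strictly convex on [a, b]; the strict Jensen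
   inequality for the two-point mean with weights 1/2 then gives
   Lambda < a = min (resp. Lambda > b = max). *)

Lemma deriv_within_continuous I f x l : deriv_within I f x l -> cont_within I f x.
Proof.
  intros H eps Heps.
  destruct (H 1 Rlt_0_1) as [d [Hd Hy]].
  assert (Hpos : 0 < Rabs l + 1) by (pose proof (Rabs_pos l); lra).
  exists (Rmin d (eps / (Rabs l + 1))); split.
  { apply Rmin_pos; auto. apply Rdiv_lt_0_compat; auto. }
  intros y Iy Hyx.
  destruct (Req_dec y x) as [->|Hne].
  { rewrite Rminus_diag, Rabs_R0; lra. }
  assert (Hq := Hy y Iy Hne (Rlt_le_trans _ _ _ Hyx (Rmin_l _ _))).
  assert (Hyx2 := Rlt_le_trans _ _ _ Hyx (Rmin_r _ _)).
  assert (Hyx0 : y - x <> 0) by lra.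
  (* |f y - f x| = |slope| * |y - x| with |slope| <= |l| + 1 *)
  replace (f y - f x) with (((f y - f x) / (y - x) - l + l) * (y - x)) by (field; auto).
  rewrite Rabs_mult.
  assert (Hslope : Rabs ((f y - f x) / (y - x) - l + l) <= Rabs l + 1).
  { eapply Rle_trans. apply Rabs_triang. lra. }
  apply Rle_lt_trans with ((Rabs l + 1) * Rabs (y - x)).
  { apply Rmult_le_compat_r; auto. apply Rabs_pos. }
  apply Rlt_le_trans with ((Rabs l + 1) * (eps / (Rabs l + 1))).
  { apply Rmult_lt_compat_l; auto. }
  right; field; lra.
Qed.

Lemma deriv_within_lin I u v x lu lv al be :
  deriv_within I u x lu -> deriv_within I v x lv ->
  deriv_within I (fun y => al * u y + be * v y) x (al * lu + be * lv).
Proof.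
  intros Hu Hv eps Heps.
  set (K := Rabs al + Rabs be + 1).
  assert (Hal := Rabs_pos al). assert (Hbe := Rabs_pos be).
  assert (HK : 0 < K) by (unfold K; lra).
  destruct (Hu (eps / K)) as [d1 [Hd1 H1]]. { apply Rdiv_lt_0_compat; lra. }
  destruct (Hv (eps / K)) as [d2 [Hd2 H2]]. { apply Rdiv_lt_0_compat; lra. }
  exists (Rmin d1 d2); split. { apply Rmin_pos; auto. }
  intros y Iy Hne Hyx.
  specialize (H1 y Iy Hne (Rlt_le_trans _ _ _ Hyx (Rmin_l _ _))).
  specialize (H2 y Iy Hne (Rlt_le_trans _ _ _ Hyx (Rmin_r _ _))).
  assert (Hyx0 : y - x <> 0) by lra.
  replace ((al * u y + be * v y - (al * u x + be * v x)) / (y - x) - (al * lu + be * lv))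
    with (al * ((u y - u x) / (y - x) - lu) + be * ((v y - v x) / (y - x) - lv))
    by (field; auto).
  eapply Rle_lt_trans. apply Rabs_triang. rewrite !Rabs_mult.
  assert (A1 : Rabs al * Rabs ((u y - u x) / (y - x) - lu) <= Rabs al * (eps / K))
    by (apply Rmult_le_compat_l; lra).
  assert (A2 : Rabs be * Rabs ((v y - v x) / (y - x) - lv) <= Rabs be * (eps / K))
    by (apply Rmult_le_compat_l; lra).
  assert (E : Rabs al * (eps / K) + Rabs be * (eps / K) = eps - eps / K)
    by (unfold K; field; lra).
  assert (0 < eps / K) by (apply Rdiv_lt_0_compat; lra).
  lra.
Qed.

Lemma cont_within_opp I u t : cont_within I u t -> cont_within I (fun y => - u y) t.
Proof.
  intros H eps He. destruct (H eps He) as [d [Hd Hy]]. exists d; split; auto.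
  intros y Iy Hyt. replace (- u y - - u t) with (- (u y - u t)) by ring.
  rewrite Rabs_Ropp. auto.
Qed.

(* Projection onto [a, b]; it turns a function known on [a, b] into one on R. *)
Definition clamp a b x := Rmax a (Rmin b x).

Lemma clamp_in a b x : a <= b -> a <= clamp a b x <= b.
Proof. intros; unfold clamp, Rmax, Rmin; repeat destruct Rle_dec; lra. Qed.

Lemma clamp_id a b x : a <= x <= b -> clamp a b x = x.
Proof. intros; unfold clamp, Rmax, Rmin; repeat destruct Rle_dec; lra. Qed.

Lemma clamp_contracting a b x c : a <= c <= b -> Rabs (clamp a b x - c) <= Rabs (x - c).
Proof.
  intros; unfold clamp, Rmax, Rmin; repeat destruct Rle_dec;
  unfold Rabs; repeat destruct Rcase_abs; lra.
Qed.

(* Mean value theorem for relative derivatives on a subinterval [a, b] of I: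
   Stdlib's MVT applied to phi composed with the clamp onto [a, b]. *)
Lemma mvt_within I phi phi1 a b :
  is_interval I -> I a -> I b -> a < b ->
  (forall t, a <= t <= b -> deriv_within I phi t (phi1 t)) ->
  exists xi, a < xi < b /\ phi b - phi a = phi1 xi * (b - a).
Proof.
  intros HI Ia Ib Hab Hd.
  set (H := fun x => phi (clamp a b x)).
  assert (Hlim : forall c, a < c < b -> derivable_pt_lim H c (phi1 c)).
  { intros c Hc eps Heps.
    destruct (Hd c ltac:(lra) eps Heps) as [d [Hdp Hy]].
    assert (Hm : 0 < Rmin d (Rmin (c - a) (b - c))) by (repeat apply Rmin_pos; lra).
    exists (mkposreal _ Hm). intros h0 Hh0 Hh. simpl in Hh.
    assert (h1 := Rmin_l d (Rmin (c - a) (b - c))).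
    assert (h2 := Rmin_r d (Rmin (c - a) (b - c))).
    assert (h3 := Rmin_l (c - a) (b - c)). assert (h4 := Rmin_r (c - a) (b - c)).
    assert (Hch : a <= c + h0 <= b) by (unfold Rabs in Hh; destruct Rcase_abs in Hh; lra).
    unfold H. rewrite (clamp_id a b c), (clamp_id a b (c + h0)) by lra.
    specialize (Hy (c + h0)).
    replace (c + h0 - c) with h0 in Hy by ring.
    apply Hy; [apply (HI a b); tauto | lra | lra]. }
  assert (pr1 : forall c, a < c < b -> derivable_pt H c).
  { intros c Hc. exists (phi1 c). apply Hlim; auto. }
  assert (pr2 : forall c, a < c < b -> derivable_pt id c).
  { intros c Hc. exists 1. apply derivable_pt_lim_id. }
  assert (Hc1 : forall c, a <= c <= b -> continuity_pt H c).
  { intros c Hc eps Heps.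
    destruct (deriv_within_continuous _ _ _ _ (Hd c Hc) eps Heps) as [d [Hdp Hy]].
    exists d; split; auto. intros x0 [_ Hx0]. simpl in *. unfold R_dist in *.
    unfold H. rewrite (clamp_id a b c) by lra.
    apply Hy.
    - destruct (clamp_in a b x0) as [u v]; [lra|]. apply (HI a b); auto.
    - eapply Rle_lt_trans; [apply clamp_contracting; lra | exact Hx0]. }
  assert (Hc2 : forall c, a <= c <= b -> continuity_pt id c).
  { intros; apply derivable_continuous_pt. exists 1. apply derivable_pt_lim_id. }
  destruct (MVT H id a b pr1 pr2 Hab Hc1 Hc2) as [xi [P E]].
  exists xi; split; auto.
  rewrite (derive_pt_eq_0 _ _ _ _ (Hlim xi P)) in E.
  rewrite (derive_pt_eq_0 _ _ _ _ (derivable_pt_lim_id xi)) in E.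
  unfold H, id in E. rewrite !clamp_id in E by lra. lra.
Qed.

Definition twice_diff_on (I : R -> Prop) (h h1 h2 : R -> R) : Prop :=
  forall t, I t -> deriv_within I h t (h1 t) /\ deriv_within I h1 t (h2 t).

Lemma C2_twice_diff I h h1 h2 : C2_on I h h1 h2 -> twice_diff_on I h h1 h2.
Proof. intros H t It; destruct (H t It) as [a [b _]]; auto. Qed.

Lemma twice_diff_lin I u u1 u2 v v1 v2 al be :
  twice_diff_on I u u1 u2 -> twice_diff_on I v v1 v2 ->
  twice_diff_on I (fun y => al * u y + be * v y) (fun y => al * u1 y + be * v1 y)
    (fun y => al * u2 y + be * v2 y).
Proof.
  intros Hu Hv t It. destruct (Hu t It), (Hv t It).
  split; apply deriv_within_lin; auto.
Qed.

Lemma tangent_remainder I h h1 h2 lo hi c y :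
  is_interval I -> twice_diff_on I h h1 h2 ->
  I lo -> I hi -> lo <= c <= hi -> lo <= y <= hi -> y <> c ->
  exists eta k, lo <= eta <= hi /\ 0 < k /\ h y - h c - h1 c * (y - c) = h2 eta * k.
Proof.
  intros HI Hd Ilo Ihi Hc Hy Hne.
  assert (II : forall t, lo <= t <= hi -> I t) by (intros t Ht; apply (HI lo hi); tauto).
  assert (D0 : forall u v, lo <= u -> v <= hi -> forall t, u <= t <= v ->
                 deriv_within I h t (h1 t)) by (intros; apply Hd, II; lra).
  assert (D1 : forall u v, lo <= u -> v <= hi -> forall t, u <= t <= v ->
                 deriv_within I h1 t (h2 t)) by (intros; apply Hd, II; lra).
  destruct (Rlt_or_le c y) as [Hlt|Hle].
  - destruct (mvt_within I h h1 c y HI (II c Hc) (II y Hy) Hlt (D0 c y ltac:(lra) ltac:(lra)))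
      as [xi [Hxi E1]].
    destruct (mvt_within I h1 h2 c xi HI (II c Hc) (II xi ltac:(lra)) ltac:(lra)
                (D1 c xi ltac:(lra) ltac:(lra))) as [eta [Heta E2]].
    exists eta, ((xi - c) * (y - c)); repeat split; try lra.
    + apply Rmult_lt_0_compat; lra.
    + rewrite E1. replace (h1 xi * (y - c) - h1 c * (y - c)) with ((h1 xi - h1 c) * (y - c))
        by ring.
      rewrite E2. ring.
  - destruct (mvt_within I h h1 y c HI (II y Hy) (II c Hc) ltac:(lra) (D0 y c ltac:(lra) ltac:(lra)))
      as [xi [Hxi E1]].
    destruct (mvt_within I h1 h2 xi c HI (II xi ltac:(lra)) (II c Hc) ltac:(lra)
                (D1 xi c ltac:(lra) ltac:(lra))) as [eta [Heta E2]].
    exists eta, ((c - xi) * (c - y)); repeat split; try lra.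
    + apply Rmult_lt_0_compat; lra.
    + replace (h y - h c - h1 c * (y - c))
        with ((h1 c - h1 xi) * (c - y) - (h c - h y - h1 xi * (c - y))) by ring.
      rewrite E1, E2. ring.
Qed.

Lemma sumR_ext n a b : (forall i, (i < n)%nat -> a i = b i) -> sumR n a = sumR n b.
Proof.
  induction n; simpl; intros H; auto.
  rewrite IHn by (intros; apply H; lia). rewrite H by lia. auto.
Qed.

Lemma sumR_lin n a b al be :
  sumR n (fun i => al * a i + be * b i) = al * sumR n a + be * sumR n b.
Proof. induction n; simpl; [ring|]. rewrite IHn. ring. Qed.

Lemma sumR_nonneg n a : (forall i, (i < n)%nat -> 0 <= a i) -> 0 <= sumR n a.
Proof.
  induction n; simpl; intros H; [lra|].
  assert (0 <= sumR n a) by (apply IHn; intros; apply H; lia).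
  assert (H1 := H n ltac:(lia)). lra.
Qed.

Lemma sumR_pos n a j :
  (j < n)%nat -> 0 < a j -> (forall i, (i < n)%nat -> 0 <= a i) -> 0 < sumR n a.
Proof.
  induction n; simpl; intros Hj Hpos H; [lia|].
  destruct (Nat.eq_dec j n) as [->|Hne].
  - assert (0 <= sumR n a) by (apply sumR_nonneg; intros; apply H; lia). lra.
  - assert (0 < sumR n a) by (apply IHn; [lia | auto | intros; apply H; lia]).
    assert (H1 := H n ltac:(lia)). lra.
Qed.

Lemma weighted_mean_between n p x lo hi :
  (forall i, (i < n)%nat -> 0 < p i) -> sumR n p = 1 ->
  (forall i, (i < n)%nat -> lo <= x i <= hi) -> lo <= sumR n (fun i => p i * x i) <= hi.
Proof.
  intros Hp Hs Hx.
  assert (Hlo : sumR n (fun i => p i * x i) - lo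
                = sumR n (fun i => p i * (x i - lo))).
  { rewrite <- (Rmult_1_r lo) at 1. rewrite <- Hs.
    rewrite (sumR_ext n (fun i => p i * (x i - lo)) (fun i => 1 * (p i * x i) + (- lo) * p i))
      by (intros; ring).
    rewrite sumR_lin. ring. }
  assert (Hhi : hi - sumR n (fun i => p i * x i)
                = sumR n (fun i => p i * (hi - x i))).
  { rewrite <- (Rmult_1_r hi) at 1. rewrite <- Hs.
    rewrite (sumR_ext n (fun i => p i * (hi - x i)) (fun i => hi * p i + (- 1) * (p i * x i)))
      by (intros; ring).
    rewrite sumR_lin. ring. }
  assert (0 <= sumR n (fun i => p i * (x i - lo))).
  { apply sumR_nonneg. intros i Hi. assert (Hpi := Hp i Hi). assert (Hxi := Hx i Hi). nra. }
  assert (0 <= sumR n (fun i => p i * (hi - x i))).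
  { apply sumR_nonneg. intros i Hi. assert (Hpi := Hp i Hi). assert (Hxi := Hx i Hi). nra. }
  lra.
Qed.

Lemma jensen_lin u v al be n p x :
  jensen (fun y => al * u y + be * v y) n p x = al * jensen u n p x + be * jensen v n p x.
Proof.
  unfold jensen.
  rewrite (sumR_ext n (fun i => p i * (al * u (x i) + be * v (x i)))
             (fun i => al * (p i * u (x i)) + be * (p i * v (x i)))) by (intros; ring).
  rewrite sumR_lin. ring.
Qed.

Lemma jensen_tangent_form h h1 n p x :
  sumR n p = 1 ->
  let c := sumR n (fun i => p i * x i) in
  jensen h n p x = sumR n (fun i => p i * (h (x i) - h c - h1 c * (x i - c))).
Proof.
  intros Hs c. unfold jensen. fold c.
  rewrite (sumR_ext n (fun i => p i * (h (x i) - h c - h1 c * (x i - c)))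
    (fun i => 1 * (p i * h (x i) - h1 c * (p i * x i)) + (h1 c * c - h c) * p i))
    by (intros; ring).
  rewrite sumR_lin, Hs.
  rewrite (sumR_ext n (fun i => p i * h (x i) - h1 c * (p i * x i))
    (fun i => 1 * (p i * h (x i)) + (- h1 c) * (p i * x i))) by (intros; ring).
  rewrite sumR_lin. fold c. ring.
Qed.

(* Jensen's inequality for points in [lo, hi] ⊆ I, with nonnegative
   (resp. positive) second derivative on [lo, hi]: each tangent-line gap in
   [jensen_tangent_form] is nonnegative (resp. positive off the mean). *)
Section Jensen.
Variables (I : R -> Prop) (h h1 h2 : R -> R) (n : nat) (p x : nat -> R) (lo hi : R).
Hypotheses (HI : is_interval I) (Hh : twice_diff_on I h h1 h2) (Ilo : I lo) (Ihi : I hi)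
  (Hp : forall i, (i < n)%nat -> 0 < p i) (Hs : sumR n p = 1)
  (Hx : forall i, (i < n)%nat -> lo <= x i <= hi).

Let c := sumR n (fun i => p i * x i).

Let Hc : lo <= c <= hi.
Proof. apply weighted_mean_between; auto. Qed.

Let tangent_gap_nonneg :
  (forall t, lo <= t <= hi -> 0 <= h2 t) ->
  forall i, (i < n)%nat -> 0 <= p i * (h (x i) - h c - h1 c * (x i - c)).
Proof.
  intros H2 i Hi. apply Rmult_le_pos; [left; auto|].
  destruct (Req_dec (x i) c) as [E|E]. { rewrite E; lra. }
  destruct (tangent_remainder I h h1 h2 lo hi c (x i) HI Hh Ilo Ihi Hc (Hx i Hi) E)
    as [eta [k [He [Hk Eq]]]].
  rewrite Eq. apply Rmult_le_pos; auto; lra.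
Qed.

Lemma jensen_nonneg : (forall t, lo <= t <= hi -> 0 <= h2 t) -> 0 <= jensen h n p x.
Proof.
  intros H2. rewrite (jensen_tangent_form h h1 n p x Hs).
  apply sumR_nonneg, tangent_gap_nonneg, H2.
Qed.

Lemma jensen_pos :
  (forall t, lo <= t <= hi -> 0 < h2 t) ->
  (exists i j, (i < n)%nat /\ (j < n)%nat /\ x i <> x j) -> 0 < jensen h n p x.
Proof.
  intros H2 [i [j [Hi [Hj Hij]]]].
  assert (exists k, (k < n)%nat /\ x k <> c) as [k [Hk Hkc]].
  { destruct (Req_dec (x i) c); [exists j; split; auto; congruence | exists i; auto]. }
  rewrite (jensen_tangent_form h h1 n p x Hs). fold c.
  apply (sumR_pos _ _ k Hk).
  - destruct (tangent_remainder I h h1 h2 lo hi c (x k) HI Hh Ilo Ihi Hc (Hx k Hk) Hkc)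
      as [eta [kk [He [Hkk Eq]]]].
    rewrite Eq. apply Rmult_lt_0_compat; auto. apply Rmult_lt_0_compat; auto.
  - apply tangent_gap_nonneg. intros t Ht. left; auto.
Qed.
End Jensen.

Lemma Lambda_between_iff f g n p x m M :
  0 < jensen g n p x ->
  (m <= Lambda f g n p x <= M <->
   m * jensen g n p x <= jensen f n p x <= M * jensen g n p x).
Proof.
  intros Hg. unfold Lambda.
  set (u := jensen f n p x) in *. set (v := jensen g n p x) in *.
  assert (Hu : u = u / v * v) by (field; lra).
  set (q := u / v) in *. rewrite Hu. split; intros [H1 H2]; split; nra.
Qed.

Lemma min_aux_spec k x :
  (forall i, (i <= k)%nat -> min_aux k x <= x i) /\
  exists i, (i <= k)%nat /\ min_aux k x = x i.
Proof.
  induction k as [|k [IH1 [j [Hj Ej]]]]; simpl.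
  - split; [intros i Hi; replace i with 0%nat by lia; lra | exists 0%nat; auto].
  - split.
    + intros i Hi. destruct (Nat.eq_dec i (S k)) as [->|Hne]; [apply Rmin_r|].
      eapply Rle_trans; [apply Rmin_l | apply IH1; lia].
    + unfold Rmin; destruct Rle_dec; [exists j | exists (S k)]; split; auto.
Qed.

Lemma max_aux_spec k x :
  (forall i, (i <= k)%nat -> x i <= max_aux k x) /\
  exists i, (i <= k)%nat /\ max_aux k x = x i.
Proof.
  induction k as [|k [IH1 [j [Hj Ej]]]]; simpl.
  - split; [intros i Hi; replace i with 0%nat by lia; lra | exists 0%nat; auto].
  - split.
    + intros i Hi. destruct (Nat.eq_dec i (S k)) as [->|Hne]; [apply Rmax_r|].
      eapply Rle_trans; [apply IH1; lia | apply Rmax_l].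
    + unfold Rmax; destruct Rle_dec; [exists (S k) | exists j]; split; auto.
Qed.

Lemma minR_maxR_spec n x : (1 <= n)%nat ->
  (forall i, (i < n)%nat -> minR n x <= x i <= maxR n x) /\
  (exists i, (i < n)%nat /\ minR n x = x i) /\ (exists j, (j < n)%nat /\ maxR n x = x j).
Proof.
  intros Hn. unfold minR, maxR.
  destruct (min_aux_spec (n - 1) x) as [Hmin [i [Hi Ei]]].
  destruct (max_aux_spec (n - 1) x) as [Hmax [j [Hj Ej]]].
  split; [|split; [exists i | exists j]; split; auto; lia].
  intros k Hk. split; [apply Hmin | apply Hmax]; lia.
Qed.

(* Sufficiency: if f'' = t g'' then, with m and M the extreme points,
   (f - m g)'' = (t - m) g'' and (M g - f)'' = (M - t) g'' are nonnegative on
   [m, M], so Jensen's inequality bounds J(f) between m J(g) and M J(g). *)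
Lemma Lambda_between_of_identity I f f1 f2 g g1 g2 n p x :
  is_interval I -> C2_on I f f1 f2 -> C2_on I g g1 g2 ->
  (forall t, I t -> 0 < g2 t) -> (forall t, I t -> f2 t = t * g2 t) ->
  (1 <= n)%nat -> (forall i, (i < n)%nat -> 0 < p i) -> sumR n p = 1 ->
  (forall i, (i < n)%nat -> I (x i)) ->
  (exists i j, (i < n)%nat /\ (j < n)%nat /\ x i <> x j) ->
  minR n x <= Lambda f g n p x <= maxR n x.
Proof.
  intros HI Hf Hg Hg2 Hfg Hn Hp Hs Hx Hne.
  destruct (minR_maxR_spec n x Hn) as [Hb [[i [Hi Ei]] [j [Hj Ej]]]].
  set (m := minR n x) in *. set (M := maxR n x) in *.
  assert (Im : I m) by (rewrite Ei; auto).
  assert (IM : I M) by (rewrite Ej; auto).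
  assert (IS : forall t, m <= t <= M -> I t) by (intros t Ht; apply (HI m M); tauto).
  assert (Df := C2_twice_diff _ _ _ _ Hf). assert (Dg := C2_twice_diff _ _ _ _ Hg).
  assert (Jg : 0 < jensen g n p x).
  { apply (jensen_pos I g g1 g2 n p x m M); auto; intros t Ht; apply Hg2, IS; auto. }
  assert (Jlo : 0 <= jensen (fun y => 1 * f y + (- m) * g y) n p x).
  { apply (jensen_nonneg I _ _ _ n p x m M HI (twice_diff_lin _ _ _ _ _ _ _ 1 (- m) Df Dg));
      auto.
    intros t Ht. rewrite Hfg by auto. assert (0 < g2 t) by auto. nra. }
  assert (Jhi : 0 <= jensen (fun y => (- 1) * f y + M * g y) n p x).
  { apply (jensen_nonneg I _ _ _ n p x m M HI (twice_diff_lin _ _ _ _ _ _ _ (- 1) M Df Dg));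
      auto.
    intros t Ht. rewrite Hfg by auto. assert (0 < g2 t) by auto. nra. }
  rewrite jensen_lin in Jlo, Jhi.
  apply Lambda_between_iff; auto. lra.
Qed.

Lemma comb_locally_pos I u v t0 :
  cont_within I u t0 -> cont_within I v t0 -> 0 < u t0 + t0 * v t0 ->
  exists d, 0 < d /\ forall s c, I s -> Rabs (s - t0) < d -> Rabs (c - t0) < d ->
    0 < u s + c * v s.
Proof.
  intros Hu Hv HD. set (D := u t0 + t0 * v t0) in *.
  assert (Pt : 0 < Rabs t0 + 1) by (pose proof (Rabs_pos t0); lra).
  assert (Pv : 0 < Rabs (v t0) + 1) by (pose proof (Rabs_pos (v t0)); lra).
  destruct (Hu (D / 3)) as [d1 [Hd1 H1]]; [lra|].
  destruct (Hv (D / (3 * (Rabs t0 + 1)))) as [d2 [Hd2 H2]]; [apply Rdiv_lt_0_compat; lra|].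
  set (e3 := D / (3 * (Rabs (v t0) + 1))).
  assert (He3 : 0 < e3) by (apply Rdiv_lt_0_compat; lra).
  exists (Rmin (Rmin d1 d2) (Rmin 1 e3)). split; [repeat apply Rmin_pos; lra|].
  intros s c Is Hs Hc.
  assert (m1 := Rmin_l (Rmin d1 d2) (Rmin 1 e3)). assert (m2 := Rmin_r (Rmin d1 d2) (Rmin 1 e3)).
  assert (m3 := Rmin_l d1 d2). assert (m4 := Rmin_r d1 d2).
  assert (m5 := Rmin_l 1 e3). assert (m6 := Rmin_r 1 e3).
  (* u s + c v s = D + (u s - u t0) + c (v s - v t0) + (c - t0) v t0,
     and each of the last three terms is below D/3 in absolute value *)
  assert (T1 := H1 s Is ltac:(lra)).
  assert (Hcabs : Rabs c <= Rabs t0 + 1).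
  { replace c with ((c - t0) + t0) by ring. eapply Rle_trans; [apply Rabs_triang | lra]. }
  assert (T2 : Rabs (c * (v s - v t0)) < D / 3).
  { rewrite Rabs_mult.
    apply Rle_lt_trans with ((Rabs t0 + 1) * Rabs (v s - v t0)).
    { apply Rmult_le_compat_r; auto. apply Rabs_pos. }
    apply Rlt_le_trans with ((Rabs t0 + 1) * (D / (3 * (Rabs t0 + 1)))).
    { apply Rmult_lt_compat_l; auto. apply H2; auto; lra. }
    right; field; lra. }
  assert (T3 : Rabs ((c - t0) * v t0) < D / 3).
  { rewrite Rabs_mult.
    apply Rle_lt_trans with (e3 * Rabs (v t0)).
    { apply Rmult_le_compat_r; [apply Rabs_pos | lra]. }
    apply Rlt_le_trans with (e3 * (Rabs (v t0) + 1)); [apply Rmult_lt_compat_l; lra|].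
    right; unfold e3; field; lra. }
  apply Rabs_def2 in T1. apply Rabs_def2 in T2. apply Rabs_def2 in T3.
  replace (u s + c * v s) with (D + (u s - u t0) + c * (v s - v t0) + (c - t0) * v t0)
    by (unfold D; ring).
  lra.
Qed.

Lemma close_pair I t0 d :
  is_interval I -> (exists a b, I a /\ I b /\ a < b) -> I t0 -> 0 < d ->
  exists a b, a < b /\ I a /\ I b /\ Rabs (a - t0) < d /\ Rabs (b - t0) < d.
Proof.
  intros HI [a [b [Ia [Ib Hab]]]] It Hd.
  destruct (Rlt_or_le t0 b) as [Hl|Hl].
  - assert (m1 := Rmin_l b (t0 + d / 2)). assert (m2 := Rmin_r b (t0 + d / 2)).
    assert (t0 < Rmin b (t0 + d / 2)) by (unfold Rmin; destruct Rle_dec; lra).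
    exists t0, (Rmin b (t0 + d / 2)); repeat split; auto.
    + apply (HI t0 b); auto; lra.
    + rewrite Rminus_diag, Rabs_R0; lra.
    + rewrite Rabs_right; lra.
  - assert (m1 := Rmax_l a (t0 - d / 2)). assert (m2 := Rmax_r a (t0 - d / 2)).
    assert (Rmax a (t0 - d / 2) < t0) by (unfold Rmax; destruct Rle_dec; lra).
    exists (Rmax a (t0 - d / 2)), t0; repeat split; auto.
    + apply (HI a t0); auto; lra.
    + rewrite Rabs_left; lra.
    + rewrite Rminus_diag, Rabs_R0; lra.
Qed.

Lemma interval_with_positive_comb I u v t0 :
  is_interval I -> (exists a b, I a /\ I b /\ a < b) -> I t0 ->
  cont_within I u t0 -> cont_within I v t0 -> 0 < u t0 + t0 * v t0 ->
  exists a b, I a /\ I b /\ a < b /\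
    forall s c, a <= s <= b -> a <= c <= b -> 0 < u s + c * v s.
Proof.
  intros HI HInd It0 Hu Hv HD.
  destruct (comb_locally_pos I u v t0 Hu Hv HD) as [d [Hd Hpos]].
  destruct (close_pair I t0 d HI HInd It0 Hd) as [a [b [Hab [Ia [Ib [Ha Hb]]]]]].
  exists a, b; repeat split; auto.
  apply Rabs_def2 in Ha. apply Rabs_def2 in Hb.
  intros s c Hs Hc. apply Hpos; [apply (HI a b); tauto | |]; apply Rabs_def1; lra.
Qed.

Definition half (_ : nat) : R := / 2.
Definition pair (a b : R) (i : nat) : R := match i with O => a | _ => b end.

Section TwoPoints.
Variables (I : R -> Prop) (a b : R).
Hypotheses (HI : is_interval I) (Ia : I a) (Ib : I b) (Hab : a < b).

Let pair_in : forall i, (i < 2)%nat -> a <= pair a b i <= b.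
Proof. intros [|i] _; simpl; lra. Qed.

Let half_pos : forall i, (i < 2)%nat -> 0 < half i.
Proof. intros; unfold half; lra. Qed.

Let half_sum : sumR 2 half = 1.
Proof. simpl; unfold half; lra. Qed.

Let pair_nonconst : exists i j, (i < 2)%nat /\ (j < 2)%nat /\ pair a b i <> pair a b j.
Proof. exists 0%nat, 1%nat; simpl; repeat split; try lia; lra. Qed.

Lemma jensen_pair_pos h h1 h2 :
  twice_diff_on I h h1 h2 -> (forall t, a <= t <= b -> 0 < h2 t) ->
  0 < jensen h 2 half (pair a b).
Proof. intros Hh H2. apply (jensen_pos I h h1 h2 2 half (pair a b) a b); auto. Qed.

Lemma bounds_on_pair f g g1 g2 :
  twice_diff_on I g g1 g2 -> (forall t, I t -> 0 < g2 t) ->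
  (forall (n : nat) (p x : nat -> R),
      (2 <= n)%nat -> (forall i, (i < n)%nat -> 0 < p i) -> sumR n p = 1 ->
      (forall i, (i < n)%nat -> I (x i)) ->
      (exists i j, (i < n)%nat /\ (j < n)%nat /\ x i <> x j) ->
      minR n x <= Lambda f g n p x <= maxR n x) ->
  a * jensen g 2 half (pair a b) <= jensen f 2 half (pair a b)
    <= b * jensen g 2 half (pair a b).
Proof.
  intros Hg Hg2 H.
  assert (Jg : 0 < jensen g 2 half (pair a b)).
  { apply (jensen_pair_pos g g1 g2 Hg). intros t Ht; apply Hg2, (HI a b); tauto. }
  assert (Hmin : minR 2 (pair a b) = a) by (unfold minR; simpl; unfold Rmin; destruct Rle_dec; lra).
  assert (Hmax : maxR 2 (pair a b) = b) by (unfold maxR; simpl; unfold Rmax; destruct Rle_dec; lra).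
  assert (HL := H 2%nat half (pair a b) (le_n 2) half_pos half_sum
                  ltac:(intros i Hi; apply (HI a b); auto; apply pair_in; auto)
                  pair_nonconst).
  rewrite Hmin, Hmax in HL. apply Lambda_between_iff; auto.
Qed.
End TwoPoints.

(* Necessity, first case: if f''(t0) < t0 g''(t0), then a g - f is strictly
   convex on some [a, b] near t0, whence J(f) < a J(g) for the pair (a, b). *)
Lemma violation_below I f f1 f2 g g1 g2 t0 :
  is_interval I -> (exists a b, I a /\ I b /\ a < b) ->
  C2_on I f f1 f2 -> C2_on I g g1 g2 -> I t0 -> f2 t0 < t0 * g2 t0 ->
  exists a b, I a /\ I b /\ a < b /\
    jensen f 2 half (pair a b) < a * jensen g 2 half (pair a b).
Proof.
  intros HI HInd Hf Hg It0 Hlt.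
  destruct (interval_with_positive_comb I (fun y => - f2 y) g2 t0 HI HInd It0)
    as [a [b [Ia [Ib [Hab Hpos]]]]].
  { apply cont_within_opp, (Hf t0 It0). }
  { apply (Hg t0 It0). }
  { lra. }
  exists a, b; repeat split; auto.
  assert (J := jensen_pair_pos I a b HI Ia Ib Hab _ _ _
                 (twice_diff_lin _ _ _ _ _ _ _ (- 1) a
                    (C2_twice_diff _ _ _ _ Hf) (C2_twice_diff _ _ _ _ Hg))).
  rewrite jensen_lin in J.
  enough (0 < - 1 * jensen f 2 half (pair a b) + a * jensen g 2 half (pair a b)) by lra.
  apply J. intros t Ht. assert (0 < - f2 t + a * g2 t) by (apply Hpos; lra). lra.
Qed.

(* Necessity, second case: if f''(t0) > t0 g''(t0), then f - b g is strictly
   convex on some [a, b] near t0, whence J(f) > b J(g) for the pair (a, b). *)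
Lemma violation_above I f f1 f2 g g1 g2 t0 :
  is_interval I -> (exists a b, I a /\ I b /\ a < b) ->
  C2_on I f f1 f2 -> C2_on I g g1 g2 -> I t0 -> t0 * g2 t0 < f2 t0 ->
  exists a b, I a /\ I b /\ a < b /\
    b * jensen g 2 half (pair a b) < jensen f 2 half (pair a b).
Proof.
  intros HI HInd Hf Hg It0 Hgt.
  destruct (interval_with_positive_comb I f2 (fun y => - g2 y) t0 HI HInd It0)
    as [a [b [Ia [Ib [Hab Hpos]]]]].
  { apply (Hf t0 It0). }
  { apply cont_within_opp, (Hg t0 It0). }
  { lra. }
  exists a, b; repeat split; auto.
  assert (J := jensen_pair_pos I a b HI Ia Ib Hab _ _ _
                 (twice_diff_lin _ _ _ _ _ _ _ 1 (- b)
                    (C2_twice_diff _ _ _ _ Hf) (C2_twice_diff _ _ _ _ Hg))).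
  rewrite jensen_lin in J.
  enough (0 < 1 * jensen f 2 half (pair a b) + - b * jensen g 2 half (pair a b)) by lra.
  apply J. intros t Ht. assert (0 < f2 t + b * - g2 t) by (apply Hpos; lra). lra.
Qed.

Theorem theorem2 (I : R -> Prop) (f f1 f2 g g1 g2 : R -> R)
  (HI : is_interval I) (HInd : exists a b, I a /\ I b /\ a < b)
  (Hf : C2_on I f f1 f2) (Hg : C2_on I g g1 g2)
  (Hg2 : forall t, I t -> 0 < g2 t) :
  (forall (n : nat) (p x : nat -> R),
      (2 <= n)%nat ->
      (forall i, (i < n)%nat -> 0 < p i) ->
      sumR n p = 1 ->
      (forall i, (i < n)%nat -> I (x i)) ->
      (exists i j, (i < n)%nat /\ (j < n)%nat /\ x i <> x j) ->
      minR n x <= Lambda f g n p x <= maxR n x)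
  <-> (forall t, I t -> f2 t = t * g2 t).
Proof.
  assert (Dg := C2_twice_diff _ _ _ _ Hg).
  split.
  - intros H t0 It0.
    destruct (Rtotal_order (f2 t0) (t0 * g2 t0)) as [Hlt|[Heq|Hgt]]; auto; exfalso.
    + destruct (violation_below I f f1 f2 g g1 g2 t0 HI HInd Hf Hg It0 Hlt)
        as [a [b [Ia [Ib [Hab Hj]]]]].
      destruct (bounds_on_pair I a b HI Ia Ib Hab f g g1 g2 Dg Hg2 H). lra.
    + destruct (violation_above I f f1 f2 g g1 g2 t0 HI HInd Hf Hg It0 Hgt)
        as [a [b [Ia [Ib [Hab Hj]]]]].
      destruct (bounds_on_pair I a b HI Ia Ib Hab f g g1 g2 Dg Hg2 H). lra.
  - intros Hfg n p x Hn.
    apply (Lambda_between_of_identity I f f1 f2 g g1 g2); auto. lia.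
Qed.
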